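(* Let $A$ be an alphabet. For all words $\mathbf a,\mathbf b,\mathbf c,\mathbf d\in A^\ast$, in the algebra $(A^\ast,\cdot,A^\ast)$: $$\mathbf a:\mathbf b::_m\mathbf c:\mathbf d\iff \exists\,\mathbf a_1,\mathbf a_2,\mathbf a_3,\mathbf b_1,\mathbf b_2,\mathbf b_3\in A^\ast:\ \mathbf a=\mathbf a_1\mathbf a_2\mathbf a_3,\ \mathbf b=\mathbf b_1\mathbf a_2\mathbf b_3,\ \mathbf c=\mathbf a_1\mathbf b_2\mathbf a_3,\ \mathbf d=\mathbf b_1\mathbf b_2\mathbf b_3.$$
   Context: $(A^\ast,\cdot,A^\ast)$ is the algebra whose universe is the set $A^\ast$ of all finite words over $A$ (including the empty word $\varepsilon$), with concatenation as binary operation and every word as a constant. A justification is a pair of terms $s\to t$ with the variables of $t$ among those of $s$; monolinear justifications are those where $s,t$ contain only one fixed variable $x$, occurring at most once in $s$ and at most once in $t$. $\uparrow^m(\mathbf a\to\mathbf b)$ is the set of monolinear justifications $s\to t$ with $\mathbf a=s(\mathbf o)$, $\mathbf b=t(\mathbf o)$ for some value $\mathbf o$ of $x$; $\uparrow^m(\mathbf a\to\mathbf b:\!\cdot\,\mathbf c\to\mathbf d):=\uparrow^m(\mathbf a\to\mathbf b)\cap\uparrow^m(\mathbf c\to\mathbf d)$. A monolinear justification is trivial if it lies in all sets $\uparrow^m(\mathbf a'\to\mathbf b':\!\cdot\,\mathbf c'\to\mathbf d')$. $\mathbf a\to\mathbf b:\!\cdot_m\,\mathbf c\to\mathbf d$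 holds iff either (i) all justifications in $\uparrow^m(\mathbf a\to\mathbf b)\cup\uparrow^m(\mathbf c\to\mathbf d)$ are trivial, or (ii) $J_{\mathbf d}:=\uparrow^m(\mathbf a\to\mathbf b:\!\cdot\,\mathbf c\to\mathbf d)$ contains a non-trivial justification and for every $\mathbf d'$, $J_{\mathbf d}\subseteq J_{\mathbf d'}$ implies $J_{\mathbf d'}$ contains a non-trivial justification and $J_{\mathbf d'}\subseteq J_{\mathbf d}$ (ignoring trivial justifications). $\mathbf a:\mathbf b::_m\mathbf c:\mathbf d$ iff $\mathbf a\to\mathbf b:\!\cdot_m\,\mathbf c\to\mathbf d$, $\mathbf b\to\mathbf a:\!\cdot_m\,\mathbf d\to\mathbf c$, $\mathbf c\to\mathbf d:\!\cdot_m\,\mathbf a\to\mathbf b$, $\mathbf d\to\mathbf c:\!\cdot_m\,\mathbf b\to\mathbf a$ all hold. *)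

From mathcomp Require Import all_boot.
Set Implicit Arguments. Unset Strict Implicit. Unset Printing Implicit Defensive.

Section Word.
Variable A : Type.

(* Terms of the algebra (A-star, concatenation, A-star) in the single variable x:
   the variable, a constant (any word), or a concatenation. *)
Inductive term : Type :=
| Var : term
| Cst : seq A -> term
| Cat : term -> term -> term.

Fixpoint occ (t : term) : nat :=
  match t with
  | Var => 1
  | Cst _ => 0
  | Cat s u => occ s + occ u
  end.

Fixpoint eval (t : term) (o : seq A) : seq A :=
  match t with
  | Var => o
  | Cst w => w
  | Cat s u => eval s o ++ eval u o
  end.

Definition justification := (term * term)%type.

Definition monolinear (j : justification) : Prop :=
  occ j.1 <= 1 /\ occ j.2 <= 1 /\ (0 < occ j.2 -> 0 < occ j.1).

Definition up_m (a b : seq A) (j : justification) : Prop :=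
  monolinear j /\ exists o, a = eval j.1 o /\ b = eval j.2 o.

Definition up_m2 (a b c d : seq A) (j : justification) : Prop :=
  up_m a b j /\ up_m c d j.

Definition trivial_just (j : justification) : Prop :=
  monolinear j /\ forall a' b' c' d', up_m2 a' b' c' d' j.

Definition arrow_m (a b c d : seq A) : Prop :=
  (forall j, up_m a b j \/ up_m c d j -> trivial_just j)
  \/
  ((exists j, up_m2 a b c d j /\ ~ trivial_just j) /\
   forall d' : seq A,
     (forall j, up_m2 a b c d j -> ~ trivial_just j -> up_m2 a b c d' j) ->
     (exists j, up_m2 a b c d' j /\ ~ trivial_just j) /\
     (forall j, up_m2 a b c d' j -> ~ trivial_just j -> up_m2 a b c d j)).

Definition prop_m (a b c d : seq A) : Prop :=
  arrow_m a b c d /\ arrow_m b a d c /\ arrow_m c d a b /\ arrow_m d c b a.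

End Word.

(** A monolinear justification [s -> t] either has a ground right-hand side,
    so its target does not depend on [x], or has the shape [u x v -> u' x v'].
    Over a nonempty alphabet no justification is trivial, so
    [a -> b :._m c -> d] yields a common justification of [a -> b] and
    [c -> d]: either [b = d], or [a, b, c, d] factor as in the theorem.
    Doing the same for [b -> a :._m d -> c] leaves only the case [b = d],
    [a = c], factored with empty middle words.  Conversely, given the
    factorisation, the justification [a1 x a3 -> b1 x b3] forces [x = b2]
    from [c], hence determines [d] among all [d'], which is the maximality
    required by [:._m].  Over the empty alphabet all words are equal. *)

From mathcomp Require Import all_boot.

Set Implicit Arguments.
Unset Strict Implicit.
Unset Printing Implicit Defensive.

Section Words.
Variable A : Type.
Implicit Types (a b c d u v o : seq A) (t : term A) (j : justification A).

Lemma catsI u : injective (cat u).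
Proof. by elim: u => //= x u IHu v w [/IHu]. Qed.

Lemma catIs u : injective (cat^~ u).
Proof.
move=> v w /(congr1 rev); rewrite !rev_cat => /catsI /(congr1 rev).
by rewrite !revK.
Qed.

Lemma cat_nil_mid u o v : [::] = u ++ o ++ v -> o = [::].
Proof.
by move/(congr1 size)/eqP; rewrite eq_sym !size_cat !addn_eq0 => /and3P[_ /nilP].
Qed.

Definition cat_proportion a b c d : Prop :=
  exists a1 a2 a3 b1 b2 b3 : seq A,
    [/\ a = a1 ++ a2 ++ a3, b = b1 ++ a2 ++ b3,
        c = a1 ++ b2 ++ a3 & d = b1 ++ b2 ++ b3].

Lemma cat_proportion_refl a b : cat_proportion a b a b.
Proof. by exists a, [::], [::], b, [::], [::]; rewrite !cats0. Qed.

Lemma cat_proportion_inv a b c d :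
  cat_proportion a b c d -> cat_proportion b a d c.
Proof.
by case=> [a1 [a2 [a3 [b1 [b2 [b3 E]]]]]]; exists b1, a2, b3, a1, b2, a3; case: E.
Qed.

Lemma cat_proportion_sym a b c d :
  cat_proportion a b c d -> cat_proportion c d a b.
Proof.
by case=> [a1 [a2 [a3 [b1 [b2 [b3 E]]]]]]; exists a1, b2, a3, b1, a2, b3; case: E.
Qed.

Lemma eval_ground t o : occ t = 0 -> eval t o = eval t [::].
Proof.
elim: t => //= s IHs t IHt /eqP; rewrite addn_eq0 => /andP[/eqP s0 /eqP t0].
by rewrite IHs // IHt.
Qed.

Lemma eval_linear t : occ t = 1 -> exists u v, forall o, eval t o = u ++ o ++ v.
Proof.
elim: t => [|//|s IHs t IHt] /=; first by exists [::], [::] => o; rewrite cats0.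
case s0: (occ s) => [|[|//]]; case t0: (occ t) => [|[|//]] //= _.
- have [u [v Et]] := IHt t0.
  by exists (eval s [::] ++ u), v => o; rewrite Et (eval_ground o s0) -!catA.
- have [u [v Es]] := IHs s0.
  by exists u, (v ++ eval t [::]) => o; rewrite Es (eval_ground o t0) -!catA.
Qed.

Lemma monolinear_cases j : monolinear j ->
  (forall o, eval j.2 o = eval j.2 [::]) \/
  exists u v u' v', forall o, eval j.1 o = u ++ o ++ v /\ eval j.2 o = u' ++ o ++ v'.
Proof.
case: j => s t [/= s_le1 [t_le1 t_s]].
case t01: (occ t) t_le1 t_s => [|[|//]] _ t_s; first by left=> o; apply: eval_ground.
have s1 : occ s = 1 by case: (occ s) s_le1 (t_s isT) => [|[|]].
have [u [v Es]] := eval_linear s1; have [u' [v' Et]] := eval_linear t01.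
by right; exists u, v, u', v' => o; rewrite Es Et.
Qed.

Lemma up_m2_cat_proportion a b c d j :
  up_m2 a b c d j -> cat_proportion a b c d \/ b = d.
Proof.
case=> [[mj [o1 [-> ->]]] [_ [o2 [-> ->]]]].
case: (monolinear_cases mj) => [ground | [u [v [u' [v' linear]]]]].
  by right; rewrite !ground.
left; exists u, o1, v, u', o2, v'.
by rewrite !(linear o1).1 !(linear o1).2 !(linear o2).1 !(linear o2).2.
Qed.

Section NonemptyAlphabet.
Variable z : A.

(* A trivial justification would send [[::]] both to [[::]] and to [[:: z]]. *)
Lemma not_trivial_just j : ~ trivial_just j.
Proof.
case=> mj trivial.
have [[_ [o1 [s1 t1]]] _] := trivial [::] [::] [::] [::].
have [[_ [o2 [s2 t2]]] _] := trivial [::] [:: z] [::] [::].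
case: (monolinear_cases mj) => [ground | [u [v [u' [v' linear]]]]].
  by move: t2; rewrite ground -(ground o1) -t1.
move: s1 s2 t1 t2; rewrite !(linear o1).1 !(linear o2).1 => /cat_nil_mid-> /cat_nil_mid->.
by rewrite (linear [::]).2 => <-.
Qed.

Lemma arrow_m_up_m2 a b c d : arrow_m a b c d -> exists j, up_m2 a b c d j.
Proof.
case=> [all_trivial | [[j [Jj _]] _]]; last by exists j.
have ground : up_m a b (Cst a, Cst b) by split=> //; exists [::].
by case: (not_trivial_just (all_trivial _ (or_introl ground))).
Qed.

Lemma arrow_m_cat_proportion a b c d :
  arrow_m a b c d -> cat_proportion a b c d \/ b = d.
Proof. by case/arrow_m_up_m2=> j /up_m2_cat_proportion. Qed.

Lemma cat_proportion_arrow_m a b c d :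
  cat_proportion a b c d -> arrow_m a b c d.
Proof.
case=> [a1 [a2 [a3 [b1 [b2 [b3 [-> -> -> ->]]]]]]].
pose j := (Cat (Cst a1) (Cat (Var A) (Cst a3)), Cat (Cst b1) (Cat (Var A) (Cst b3))).
have Jj : up_m2 (a1 ++ a2 ++ a3) (b1 ++ a2 ++ b3) (a1 ++ b2 ++ a3) (b1 ++ b2 ++ b3) j.
  by split; split=> //; [exists a2 | exists b2].
right; split; first by exists j; split; last exact: not_trivial_just.
move=> d' /(_ j Jj (@not_trivial_just j)) [_ [_ [o [/= /catsI /catIs <- ->]]]].
by split; first by exists j; split; last exact: not_trivial_just.
Qed.

End NonemptyAlphabet.

Section EmptyAlphabet.
Hypothesis A_void : A -> False.

Lemma void_seq_eq a b : a = b.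
Proof.
have nil (s : seq A) : s = [::] by case: s => // x; case: (A_void x).
by rewrite (nil a) (nil b).
Qed.

Lemma arrow_m_void a b c d : arrow_m a b c d.
Proof.
left=> j J; have mj : monolinear j by case: J => -[].
by split=> // a' b' c' d'; split; split=> //; exists [::]; split; apply: void_seq_eq.
Qed.

End EmptyAlphabet.

End Words.

Theorem mainTheorem12 (A : finType) (a b c d : seq A) :
  prop_m a b c d <->
  exists a1 a2 a3 b1 b2 b3 : seq A,
    [/\ a = a1 ++ a2 ++ a3, b = b1 ++ a2 ++ b3,
        c = a1 ++ b2 ++ a3 & d = b1 ++ b2 ++ b3].
Proof.
case: (pickP (@predT A)) => [z _ | A_empty]; last first.
  have A_void : A -> False by move=> x; have := A_empty x.
  split=> _; last by do 3?split; apply: arrow_m_void.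
  by exists [::], [::], [::], [::], [::], [::]; split; apply: void_seq_eq.
split=> [[ab [ba _]] | P].
  case: (arrow_m_cat_proportion z ab) => [// | bd].
  case: (arrow_m_cat_proportion z ba) => [/cat_proportion_inv // | ac].
  by rewrite ac bd; apply: cat_proportion_refl.
do 3?split; apply: (cat_proportion_arrow_m z).
- exact: P.
- exact: cat_proportion_inv.
- exact: cat_proportion_sym.
- exact/cat_proportion_inv/cat_proportion_sym.
Qed.
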